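(* For every integer $l\ge 3$ there exists a (non-monotone) search $\tilde c$-strategy that cleans the tree $T_l$ using $3$ searchers, one of each color $1,2,3$.
   Context: An edge-labeled graph $G=(V(G),E(G),c)$ is a simple graph with $c\colon E(G)\to\{1,\dots,k\}$; $c(v)$ denotes the set of colors of edges incident to $v$. Edge search: a search strategy is a sequence of moves: placing a searcher on a vertex, removing a searcher from a vertex, or sliding a searcher from $u$ along an edge $\{u,v\}$ to $v$. Initially all edges are contaminated; a slide along an edge makes it clean; after every move, a clean edge $e$ becomes contaminated if some path with no searcher-occupied vertex joins an endpoint of $e$ to an endpoint of a contaminated edge. The strategy must end with all edges clean; it uses $k$ searchers if at most $k$ are simultaneously present. In a search $\tilde c$-strategy each searcher $j$ has a fixed color $\tilde c(j)$, may be placed on $v$ only if $\tilde c(j)\in c(v)$, and may slide along $e$ only if $\tilde c(j)=c(e)$. The tree $T_l$ ($l\ge 3$), with colors $\{1,2,3\}$: For $i\in\{1,2\}$, $T'_i$ has root $q_i$ with three children joined to $q_i$ by edges of color 1, and each of these children has three children joined by edges of color 2. $T''_l$: a path $v_0,v_1,\dots,v_{l+1}$ with edges $e_x=\{v_x,v_{x+1}\}$ of color $(x \bmod 3)+1$ for $x\in\{0,\dots,l\}$; additionally, for each $x\in\{1,\dots,l\}$, attach to $v_x$ one pendant edge of color $(x\bmod 3)+1$ and one pendant edge of color $((x-1)\bmod 3)+1$. Let $P$ be a path $p_0p_1p_2p_3p_4$ with edges $\{p_0,p_1\},\{p_3,p_4\}$ of color 3 and $\{p_1,p_2\},\{p_2,p_3\}$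 of color 2. $T_l$ is obtained from disjoint copies of $T'_1,T'_2,T''_l,P$ by identifying $p_2$ with $v_0$, $p_0$ with $q_1$, and $p_4$ with $q_2$. *)

From HB Require Import structures.
From mathcomp Require Import all_boot.
Set Implicit Arguments. Unset Strict Implicit. Unset Printing Implicit Defensive.

(* Edge-labelled simple graphs, given by a list of edges (u, v, colour).    *)
Definition edge (V : Type) := (V * V * nat)%type.

Section Search.
Variables (V : eqType) (G : seq (edge V)).

Definition endpt (e : edge V) (v : V) : Prop := e.1.1 = v \/ e.1.2 = v.

Definition col_at (v : V) (c : nat) : Prop :=
  exists2 e, e \in G & endpt e v /\ e.2 = c.

Definition adj (u v : V) : Prop :=
  exists2 e, e \in G & (e.1.1 = u /\ e.1.2 = v) \/ (e.1.1 = v /\ e.1.2 = u).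

Variable k : nat.
Variable ctil : 'I_k -> nat.

(* a state: position of each searcher (None = not on the graph) and the
   set of clean edges *)
Record state := State { pos : 'I_k -> option V ; clean : edge V -> Prop }.

Definition occupied (p : 'I_k -> option V) (v : V) : Prop :=
  exists j, p j = Some v.

Inductive free_conn (p : 'I_k -> option V) : V -> V -> Prop :=
| fc_refl x : ~ occupied p x -> free_conn p x x
| fc_step x y z : ~ occupied p x -> adj x y -> free_conn p y z -> free_conn p x z.

Definition recontaminate (p : 'I_k -> option V) (cl : edge V -> Prop)
  : edge V -> Prop :=
  fun e => cl e /\
    ~ (exists f x y, [/\ f \in G, ~ cl f, endpt e x, endpt f y & free_conn p x y]).

Definition upd (p : 'I_k -> option V) (j : 'I_k) (o : option V) :=
  fun i => if i == j then o else p i.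

Inductive move : state -> state -> Prop :=
| mv_place (s : state) (j : 'I_k) (v : V) :
    pos s j = None -> col_at v (ctil j) ->
    move s (State (upd (pos s) j (Some v))
                  (recontaminate (upd (pos s) j (Some v)) (clean s)))
| mv_remove (s : state) (j : 'I_k) (v : V) :
    pos s j = Some v ->
    move s (State (upd (pos s) j None)
                  (recontaminate (upd (pos s) j None) (clean s)))
| mv_slide (s : state) (j : 'I_k) (e : edge V) (u v : V) :
    e \in G -> e.2 = ctil j ->
    (e.1.1 = u /\ e.1.2 = v \/ e.1.1 = v /\ e.1.2 = u) ->
    pos s j = Some u ->
    move s (State (upd (pos s) j (Some v))
                  (recontaminate (upd (pos s) j (Some v))
                                 (fun f => clean s f \/ f = e))).

Definition search_strategy_exists : Prop :=
  exists (n : nat) (st : nat -> state),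
    [/\ (forall j, pos (st 0) j = None),
        (forall e, ~ clean (st 0) e),
        (forall i, i < n -> move (st i) (st i.+1)) &
        (forall e, e \in G -> clean (st n) e)].

End Search.

Inductive vtx :=
| Troot of nat            (* q_i, i in {1,2}  (= p_0, p_4)                 *)
| Tmid of nat & nat       (* Tmid i a : child a (a<3) of q_i                *)
| Tleaf of nat & nat & nat(* Tleaf i a b : child b (b<3) of Tmid i a        *)
| Pv of nat               (* p_1, p_3 of the path P                         *)
| Vv of nat               (* v_x, x = 0..l+1 (v_0 = p_2)                    *)
| Pend of nat & nat.      (* Pend x t : the two pendant leaves at v_x        *)

Definition vtx_eq_dec (x y : vtx) : {x = y} + {x <> y}.
Proof. decide equality; exact: (fun m n : nat => decP (@eqP _ m n)). Defined.

Definition vtx_eqb (x y : vtx) : bool := if vtx_eq_dec x y then true else false.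

Lemma vtx_eqP : Equality.axiom vtx_eqb.
Proof. by move=> x y; rewrite /vtx_eqb; case: vtx_eq_dec => h; constructor. Qed.

HB.instance Definition _ := hasDecEq.Build vtx vtx_eqP.

Definition T_edges (l : nat) : seq (edge vtx) :=
  (* the path P with p_0 = q_1, p_2 = v_0, p_4 = q_2 *)
  [:: (Troot 1, Pv 1, 3); (Pv 1, Vv 0, 2); (Vv 0, Pv 3, 2); (Pv 3, Troot 2, 3)]
  ++ flatten [seq (Troot i, Tmid i a, 1) ::
                  [seq (Tmid i a, Tleaf i a b, 2) | b <- iota 0 3]
             | i <- [:: 1; 2], a <- iota 0 3]
  ++ [seq (Vv x, Vv x.+1, (x %% 3).+1) | x <- iota 0 l.+1]
  ++ flatten [seq [:: (Vv x, Pend x 0, (x %% 3).+1);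
                      (Vv x, Pend x 1, ((x - 1) %% 3).+1)]
             | x <- iota 1 l].

From mathcomp Require Import all_boot zify.
Set Implicit Arguments. Unset Strict Implicit. Unset Printing Implicit Defensive.

(* Searcher j (j = 0, 1, 2, written s1, s2, s3 below) has colour j+1.
   1. s3 guards q_1 while s1 and s2 clean T'_1 branch by branch (s1 on the
      root edges, s2 on the leaf edges);
   2. the spine v_0 .. v_(l+1) of T''_l is cleaned from its far end backwards:
      one searcher stands on the current spine vertex v_x, one guards T'_1
      (from p_1 if it has colour 2, from q_1 otherwise), and the third one,
      whose colour is that of the spine edge e_(x-1), helps clean the two
      pendant edges at v_x and then slides down to v_(x-1); the three roles
      rotate with x mod 3;
   3. the path P is cleaned from q_1 to q_2, and finally T'_2 as in step 1.
   The argument works for every l >= 1.  The file first proves two general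
   facts: clean edges forming a "sealed" set survive recontamination, and a
   valid script of moves ending with all edges clean is a search strategy. *)

(* No contaminated
   edge can reach a sealed set of clean edges along a searcher-free walk. *)
Section Sealed.
Variables (V : eqType) (G : seq (edge V)) (k : nat).

Definition sealed (p : 'I_k -> option V) (S : edge V -> bool) : Prop :=
  forall w, ~ occupied p w -> (exists e, [/\ e \in G, S e & endpt e w]) ->
    forall g, g \in G -> endpt g w -> S g.

Lemma free_conn_sealed p (S : edge V -> bool) x y :
  sealed p S -> free_conn G p x y -> (exists e, [/\ e \in G, S e & endpt e x]) ->
  forall g, g \in G -> endpt g y -> S g.
Proof.
move=> sealS; elim=> {x y} [x freex|x y z freex [e eG ends] _ IH] touchx.
  exact: sealS.
apply: IH; exists e; split=> //; rewrite /endpt.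
  apply: (sealS x freex touchx e eG); rewrite /endpt.
  by case: ends => [[-> _]|[_ ->]]; [left|right].
by case: ends => [[_ ->]|[-> _]]; [right|left].
Qed.

Lemma recontaminate_sealed p (cl : edge V -> Prop) (S : edge V -> bool) :
  (forall e, e \in G -> S e -> cl e) -> sealed p S ->
  forall e, e \in G -> S e -> recontaminate G p cl e.
Proof.
move=> S_clean sealS e eG Se; split; first exact: S_clean.
case=> f [x [y [fG f_dirty ex fy walk]]]; apply: f_dirty; apply: S_clean => //.
by apply: (free_conn_sealed sealS walk) => //; exists e.
Qed.

End Sealed.

Section Scripts.
Variables (V : eqType) (G : seq (edge V)) (k : nat) (ctil : 'I_k -> nat).

Inductive act := Place of 'I_k & V | Remove of 'I_k | Slide of 'I_k & edge V & V.

Definition step (s : state V k) (a : act) : state V k :=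
  match a with
  | Place j v => State (upd (pos s) j (Some v))
                       (recontaminate G (upd (pos s) j (Some v)) (clean s))
  | Remove j => State (upd (pos s) j None)
                      (recontaminate G (upd (pos s) j None) (clean s))
  | Slide j e v => State (upd (pos s) j (Some v))
                         (recontaminate G (upd (pos s) j (Some v))
                                        (fun f => clean s f \/ f = e))
  end.

Definition run (s : state V k) (sc : seq act) : state V k := foldl step s sc.

Fixpoint valid (s : state V k) (sc : seq act) : Prop :=
  if sc is a :: sc' then move G ctil s (step s a) /\ valid (step s a) sc' else True.

Lemma valid_cat s sc1 sc2 : valid s (sc1 ++ sc2) <-> valid s sc1 /\ valid (run s sc1) sc2.
Proof. by elim: sc1 s => [|a sc1 IH] s /=; [tauto|rewrite IH; tauto]. Qed.

Lemma run_cat s sc1 sc2 : run s (sc1 ++ sc2) = run (run s sc1) sc2.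
Proof. exact: foldl_cat. Qed.

Lemma valid_take s sc i : valid s sc -> i < size sc ->
  move G ctil (run s (take i sc)) (run s (take i.+1 sc)).
Proof.
elim: sc s i => [|a sc IH] s [|i] //= [mv vsc] lti; first by rewrite take0.
exact: IH.
Qed.

Definition empty_state : state V k := State (fun=> None) (fun=> False).

Lemma strategy_of_script sc : valid empty_state sc ->
  (forall e, e \in G -> clean (run empty_state sc) e) -> search_strategy_exists G ctil.
Proof.
move=> vsc all_clean; exists (size sc), (fun i => run empty_state (take i sc)).
split=> [j|e|i|]; rewrite ?take0 ?take_size //.
exact: valid_take.
Qed.

End Scripts.

Arguments Place {V k}.
Arguments Remove {V k}.
Arguments Slide {V k}.

Inductive tl_edge (l : nat) : edge vtx -> Prop :=
| E_q1p1 : tl_edge l (Troot 1, Pv 1, 3)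
| E_p1v0 : tl_edge l (Pv 1, Vv 0, 2)
| E_v0p3 : tl_edge l (Vv 0, Pv 3, 2)
| E_p3q2 : tl_edge l (Pv 3, Troot 2, 3)
| E_root i a : (i == 1) || (i == 2) -> a < 3 -> tl_edge l (Troot i, Tmid i a, 1)
| E_leaf i a b : (i == 1) || (i == 2) -> a < 3 -> b < 3 ->
    tl_edge l (Tmid i a, Tleaf i a b, 2)
| E_spine y : y <= l -> tl_edge l (Vv y, Vv y.+1, (y %% 3).+1)
| E_pend0 y : 0 < y <= l -> tl_edge l (Vv y, Pend y 0, (y %% 3).+1)
| E_pend1 y : 0 < y <= l -> tl_edge l (Vv y, Pend y 1, ((y - 1) %% 3).+1).

Lemma T_edgesP l g : g \in T_edges l -> tl_edge l g.
Proof.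
rewrite /T_edges !mem_cat => /orP[H|/orP[H|/orP[H|H]]].
- move: H; rewrite !inE.
  by repeat (case/orP => [/eqP->|]; first by constructor); move/eqP->; constructor.
- move: H; rewrite /= !inE => H.
  by repeat (case/orP: H => H); try (move/eqP: H => ->; by constructor).
- case/mapP: H => y; rewrite mem_iota => /andP[_ Hy] ->; constructor; lia.
- case/flatten_mapP: H => y; rewrite mem_iota => /andP[H1 H2].
  by rewrite !inE => /orP[/eqP->|/eqP->]; constructor; lia.
Qed.

Section Membership.
Variable l : nat.

Lemma mem_q1p1 : (Troot 1, Pv 1, 3) \in T_edges l.
Proof. by rewrite mem_cat inE eqxx. Qed.
Lemma mem_p1v0 : (Pv 1, Vv 0, 2) \in T_edges l.
Proof. by rewrite mem_cat !inE eqxx orbT. Qed.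
Lemma mem_v0p3 : (Vv 0, Pv 3, 2) \in T_edges l.
Proof. by rewrite mem_cat !inE eqxx !orbT. Qed.
Lemma mem_p3q2 : (Pv 3, Troot 2, 3) \in T_edges l.
Proof. by rewrite mem_cat !inE eqxx !orbT. Qed.

Lemma mem_subtree g : g \in flatten [seq (Troot i, Tmid i a, 1) ::
    [seq (Tmid i a, Tleaf i a b, 2) | b <- iota 0 3] | i <- [:: 1; 2], a <- iota 0 3] ->
  g \in T_edges l.
Proof. by move=> H; rewrite /T_edges mem_cat mem_cat H orbT. Qed.

Lemma mem_root i a : (i == 1) || (i == 2) -> a < 3 -> (Troot i, Tmid i a, 1) \in T_edges l.
Proof.
by move=> Hi Ha; apply: mem_subtree; case/orP: Hi => /eqP->; case: a Ha => [|[|[|]]].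
Qed.

Lemma mem_leaf i a b : (i == 1) || (i == 2) -> a < 3 -> b < 3 ->
  (Tmid i a, Tleaf i a b, 2) \in T_edges l.
Proof.
move=> Hi Ha Hb; apply: mem_subtree.
by case/orP: Hi => /eqP->; case: a Ha => [|[|[|]]] //; case: b Hb => [|[|[|]]].
Qed.

Lemma mem_spine y : y <= l -> (Vv y, Vv y.+1, (y %% 3).+1) \in T_edges l.
Proof.
move=> Hy; rewrite /T_edges !mem_cat; apply/orP; right; apply/orP; right.
by apply/orP; left; apply/mapP; exists y => //; rewrite mem_iota; lia.
Qed.

Lemma mem_pendants y t : 0 < y <= l -> t < 2 ->
  (Vv y, Pend y t, ((if t is 0 then y else y - 1) %% 3).+1) \in T_edges l.
Proof.
move=> Hy Ht; rewrite /T_edges !mem_cat; apply/orP; right; apply/orP; right.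
apply/orP; right; apply/flatten_mapP; exists y; first by rewrite mem_iota; lia.
by case: t Ht => [|[|]] //= _; rewrite !inE eqxx ?orbT.
Qed.

Lemma mem_pend0 y : 0 < y <= l -> (Vv y, Pend y 0, (y %% 3).+1) \in T_edges l.
Proof. by move=> Hy; apply: (@mem_pendants y 0 Hy). Qed.
Lemma mem_pend1 y : 0 < y <= l -> (Vv y, Pend y 1, ((y - 1) %% 3).+1) \in T_edges l.
Proof. by move=> Hy; apply: (@mem_pendants y 1 Hy). Qed.

End Membership.

Definition incident (l : nat) (w : vtx) : seq (edge vtx) :=
  match w with
  | Troot i => if i == 1 then [:: (Troot 1, Pv 1, 3); (Troot 1, Tmid 1 0, 1);
                                  (Troot 1, Tmid 1 1, 1); (Troot 1, Tmid 1 2, 1)]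
               else if i == 2 then [:: (Pv 3, Troot 2, 3); (Troot 2, Tmid 2 0, 1);
                                  (Troot 2, Tmid 2 1, 1); (Troot 2, Tmid 2 2, 1)]
               else [::]
  | Tmid i a => if ((i == 1) || (i == 2)) && (a < 3) then
                  [:: (Troot i, Tmid i a, 1); (Tmid i a, Tleaf i a 0, 2);
                      (Tmid i a, Tleaf i a 1, 2); (Tmid i a, Tleaf i a 2, 2)]
                else [::]
  | Tleaf i a b => [:: (Tmid i a, Tleaf i a b, 2)]
  | Pv i => if i == 1 then [:: (Troot 1, Pv 1, 3); (Pv 1, Vv 0, 2)]
            else if i == 3 then [:: (Vv 0, Pv 3, 2); (Pv 3, Troot 2, 3)] else [::]
  | Vv y => match y with
            | 0 => [:: (Pv 1, Vv 0, 2); (Vv 0, Pv 3, 2); (Vv 0, Vv 1, 1)]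
            | y'.+1 => if y' < l then
                 [:: (Vv y', Vv y'.+1, (y' %% 3).+1); (Vv y'.+1, Vv y'.+2, (y'.+1 %% 3).+1);
                     (Vv y'.+1, Pend y'.+1 0, (y'.+1 %% 3).+1);
                     (Vv y'.+1, Pend y'.+1 1, ((y'.+1 - 1) %% 3).+1)]
               else if y' == l then [:: (Vv l, Vv l.+1, (l %% 3).+1)] else [::]
            end
  | Pend y t => [:: (Vv y, Pend y t, ((if t is 0 then y else y - 1) %% 3).+1)]
  end.

Lemma incidentP l g w : g \in T_edges l -> endpt g w -> g \in incident l w.
Proof.
move/T_edgesP; case=> [||||i a Hi Ha|i a b Hi Ha Hb|y Hy|y Hy|y Hy];
  rewrite /endpt /= => -[]<- //=.
- by case/orP: Hi => /eqP->; case: a Ha => [|[|[|]]].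
- by rewrite Hi Ha /= inE eqxx.
- by rewrite Hi Ha /=; case: b Hb => [|[|[|]]] // _; rewrite !inE eqxx ?orbT.
- exact: mem_head.
- by case: y Hy => [|y] Hy //=; rewrite ifT ?inE ?eqxx ?orbT //; lia.
- case: ltnP => H; first by rewrite inE eqxx.
  by rewrite (_ : y = l) ?ltnn ?eqxx ?inE ?eqxx //; lia.
- by case: y Hy => [|y] Hy //=; rewrite ifT ?inE ?eqxx ?orbT //; lia.
- exact: mem_head.
- by case: y Hy => [|y] Hy //=; rewrite ifT ?inE ?eqxx ?orbT //; lia.
- exact: mem_head.
Qed.

(* A descriptor records, symbolically, which edges are known to be clean.
   The edges of T'_i are cleaned in a fixed order, the rank of an edge being
   [4a + b] for the leaf edge (m_a, leaf b) and [4a + 3] for the root edge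
   (q_i, m_a); [done i] edges of T'_i are clean.  The flags [pathA .. pathD]
   tell which of the edges q_1p_1, p_1v_0, v_0p_3, p_3q_2 of P are clean.
   On T''_l, the spine edges e_x with [front <= x] and the pendant edges at the
   vertices beyond v_front are clean, and the flags [pend0], [pend1] tell
   whether the two pendant edges at v_front itself are clean. *)
Record descr := Descr { done1 : nat; done2 : nat;
  pathA : bool; pathB : bool; pathC : bool; pathD : bool;
  front : nat; pend0 : bool; pend1 : bool }.

Definition tree_done (d : descr) (i rank : nat) : bool :=
  if i == 1 then rank < done1 d else if i == 2 then rank < done2 d else false.

Definition declared (d : descr) (e : edge vtx) : bool :=
  match e with
  | (Troot i, Tmid _ a, _) => tree_done d i (4 * a + 3)
  | (Tmid i a, Tleaf _ _ b, _) => tree_done d i (4 * a + b)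
  | (Troot _, Pv _, _) => pathA d
  | (Pv _, Vv _, _) => pathB d
  | (Vv _, Pv _, _) => pathC d
  | (Pv _, Troot _, _) => pathD d
  | (Vv x, Vv _, _) => front d <= x
  | (Vv x, Pend _ t, _) =>
      (front d < x) || ((x == front d) && (if t is 0 then pend0 d else pend1 d))
  | _ => false
  end.

Definition placement := (option vtx * option vtx * option vtx)%type.

Definition occupies (T : placement) (w : vtx) : Prop :=
  T.1.1 = Some w \/ T.1.2 = Some w \/ T.2 = Some w.

Definition pos_of (T : placement) (j : 'I_3) : option vtx :=
  match nat_of_ord j with 0 => T.1.1 | 1 => T.1.2 | _ => T.2 end.

Definition upd_pl (T : placement) (j : 'I_3) (o : option vtx) : placement :=
  match nat_of_ord j with
  | 0 => (o, T.1.2, T.2) | 1 => (T.1.1, o, T.2) | _ => (T.1.1, T.1.2, o) end.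

Lemma pos_of_upd T j o i : pos_of (upd_pl T j o) i = upd (pos_of T) j o i.
Proof. by case: i => [[|[|[|i]]] Hi] //; case: j => [[|[|[|j]]] Hj]. Qed.

(* Sufficient conditions, vertex by vertex, for the declared set to be
   sealed: every vertex of degree > 1 at which the declared set is neither
   empty nor full must be occupied. *)
Definition guarded (l : nat) (T : placement) (d : descr) : Prop :=
 (* the middle vertices of T'_1: branch a is either untouched or complete *)
 (forall a, a < 3 -> occupies T (Tmid 1 a) \/ done1 d <= 4*a \/ 4*a+4 <= done1 d) /\
 (* q_1: the edge q_1p_1 is clean iff all three branches of T'_1 are *)
 (occupies T (Troot 1) \/
    (pathA d = (3 < done1 d) /\ pathA d = (7 < done1 d) /\ pathA d = (11 < done1 d))) /\
 (occupies T (Pv 1) \/ pathA d = pathB d) /\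
 (* v_0: the spine has not been started, or is completely clean *)
 (occupies T (Vv 0) \/ (pathB d = pathC d /\ pathC d = (front d == 0))) /\
 (occupies T (Pv 3) \/ pathC d = pathD d) /\
 (occupies T (Troot 2) \/
    (pathD d = (3 < done2 d) /\ pathD d = (7 < done2 d) /\ pathD d = (11 < done2 d))) /\
 (forall a, a < 3 -> occupies T (Tmid 2 a) \/ done2 d <= 4*a \/ 4*a+4 <= done2 d) /\
 (0 < front d <= l -> occupies T (Vv (front d))).

Lemma guarded_closed l T d : guarded l T d -> forall w, ~ occupies T w ->
  has (declared d) (incident l w) -> all (declared d) (incident l w).
Proof.
case=> [C1 [C2 [C3 [C4 [C5 [C6 [C7 C8]]]]]]] w nw.
case: w nw => [i|i a|i a b|i|y|y t] nw /=.
- case: i nw => [|[|[|i]]] nw //=.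
  + case: C2 => [//|[E1 [E2 E3]]]; rewrite /tree_done /=.
    by rewrite -E1 -E2 -E3; case: (pathA d).
  + case: C6 => [//|[E1 [E2 E3]]]; rewrite /tree_done /=.
    by rewrite -E1 -E2 -E3; case: (pathD d).
- case: i nw => [|[|[|i]]] nw //=; case: (ltnP a 3) => Ha //=.
  + by case: (C1 a Ha) => [//|H]; rewrite /tree_done /=; lia.
  + by case: (C7 a Ha) => [//|H]; rewrite /tree_done /=; lia.
- by rewrite orbF andbT.
- case: i nw => [|[|[|[|i]]]] nw //=.
  + by case: C3 => [//|->]; case: (pathB d).
  + by case: C5 => [//|->]; case: (pathD d).
- case: y nw => [|y] nw /=.
  + by case: C4 => [//|[-> ->]]; case: (front d).
  + case: ltnP => Hy /=.
      have Hne : (y.+1 == front d) = false.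
        by apply/negbTE/eqP => E; apply: nw; rewrite E; apply: C8; lia.
      by rewrite Hne /=; lia.
    by case: eqP => //= _; rewrite orbF andbT.
- by rewrite orbF andbT.
Qed.

Lemma guarded_sealed l (p : 'I_3 -> option vtx) T d : (forall j, p j = pos_of T j) ->
  guarded l T d -> sealed (T_edges l) p (declared d).
Proof.
move=> Hp Hg w nw [e [eG Se ew]] g gG gw.
have nwT : ~ occupies T w.
  by case=> [H|[H|H]]; apply: nw; [exists ord0|exists (@Ordinal 3 1 isT)|
    exists (@Ordinal 3 2 isT)]; rewrite Hp.
have /allP := guarded_closed Hg nwT (introT hasP (ex_intro2 _ _ e (incidentP eG ew) Se)).
by apply; apply: incidentP.
Qed.

Definition colour (j : 'I_3) : nat := (nat_of_ord j).+1.

Notation s1 := (@Ordinal 3 0 isT).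
Notation s2 := (@Ordinal 3 1 isT).
Notation s3 := (@Ordinal 3 2 isT).

(* A move annotated for the symbolic execution: a placement carries an edge
   of the right colour at the target vertex, and removals and slides carry the
   update of the descriptor they effect. *)
Inductive amove :=
| APlace of 'I_3 & vtx & edge vtx
| ARemove of 'I_3 & (descr -> descr)
| ASlide of 'I_3 & edge vtx & vtx & (descr -> descr).

Definition erase (a : amove) : act vtx 3 :=
  match a with
  | APlace j v _ => Place j v
  | ARemove j _ => Remove j
  | ASlide j e v _ => Slide j e v
  end.

Section Hoare.
Variable l : nat.
Local Notation G := (T_edges l).

Definition described (T : placement) (d : descr) (s : state vtx 3) : Prop :=
  (forall j, pos s j = pos_of T j) /\ (forall g, g \in G -> declared d g -> clean s g).

Definition hoare (T : placement) (d : descr) (sc : seq amove)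
    (T' : placement) (d' : descr) : Prop :=
  forall s, described T d s ->
    valid G colour s (map erase sc) /\ described T' d' (run G s (map erase sc)).

Lemma hoare_nil T d T' d' : T = T' -> d = d' -> hoare T d [::] T' d'.
Proof. by move=> -> -> s. Qed.

Lemma hoare_cat T d sc1 T1 d1 sc2 T' d' :
  hoare T d sc1 T1 d1 -> hoare T1 d1 sc2 T' d' -> hoare T d (sc1 ++ sc2) T' d'.
Proof.
move=> H1 H2 s Hs; have [V1 D1] := H1 s Hs; have [V2 D2] := H2 _ D1.
by rewrite map_cat valid_cat run_cat.
Qed.

Lemma described_after_move T d T' d' s j o (cl : edge vtx -> Prop) :
  described T d s -> T' = upd_pl T j o ->
  (forall g, g \in G -> declared d' g -> cl g) -> guarded l T' d' ->
  described T' d' (State (upd (pos s) j o) (recontaminate G (upd (pos s) j o) cl)).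
Proof.
move=> [Hp _] -> Hcl Hg.
have Hp' i : upd (pos s) j o i = pos_of (upd_pl T j o) i.
  by rewrite pos_of_upd /upd; case: (i == j).
by split=> //= g gG; exact: (recontaminate_sealed Hcl (guarded_sealed Hp' Hg)).
Qed.

Lemma hoare_place T d j v w sc T' d' :
  pos_of T j = None -> w \in G -> endpt w v -> w.2 = colour j ->
  guarded l (upd_pl T j (Some v)) d ->
  hoare (upd_pl T j (Some v)) d sc T' d' -> hoare T d (APlace j v w :: sc) T' d'.
Proof.
move=> free_j wG wv wc Hg H s Hs.
have D1 : described (upd_pl T j (Some v)) d (step G s (Place j v)).
  by apply: (described_after_move Hs erefl _ Hg); case: Hs.
have [V1 D2] := H _ D1; split=> //; split=> //.
by apply: mv_place; [rewrite (proj1 Hs) free_j|exists w].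
Qed.

Lemma hoare_remove T d j u f sc T' d' :
  pos_of T j = Some u -> (forall g, g \in G -> declared (f d) g -> declared d g) ->
  guarded l (upd_pl T j None) (f d) ->
  hoare (upd_pl T j None) (f d) sc T' d' -> hoare T d (ARemove j f :: sc) T' d'.
Proof.
move=> at_u Hf Hg H s Hs.
have D1 : described (upd_pl T j None) (f d) (step G s (Remove j)).
  apply: (described_after_move Hs erefl _ Hg) => g gG Sg.
  by case: Hs => _; apply=> //; exact: Hf.
have [V1 D2] := H _ D1; split=> //; split=> //.
by apply: mv_remove; rewrite (proj1 Hs) at_u.
Qed.

Lemma hoare_slide T d j e u v f sc T' d' :
  e \in G -> e.2 = colour j -> (e.1.1 = u /\ e.1.2 = v \/ e.1.1 = v /\ e.1.2 = u) ->
  pos_of T j = Some u -> (forall g, g \in G -> declared (f d) g -> declared d g \/ g = e) ->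
  guarded l (upd_pl T j (Some v)) (f d) ->
  hoare (upd_pl T j (Some v)) (f d) sc T' d' -> hoare T d (ASlide j e v f :: sc) T' d'.
Proof.
move=> eG ec ends at_u Hf Hg H s Hs.
have D1 : described (upd_pl T j (Some v)) (f d) (step G s (Slide j e v)).
  apply: (described_after_move Hs erefl _ Hg) => g gG Sg.
  by case: (Hf g gG Sg) => [Sd|->]; [left; case: Hs => _; apply|right].
have [V1 D2] := H _ D1; split=> //; split=> //.
by apply: (mv_slide (u:=u)) => //; rewrite (proj1 Hs) at_u.
Qed.

End Hoare.

Definition next_tree (i : nat) (d : descr) : descr :=
  Descr (done1 d + (i == 1)) (done2 d + (i == 2)) (pathA d) (pathB d) (pathC d) (pathD d)
        (front d) (pend0 d) (pend1 d).
Definition set_pathA d :=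
  Descr (done1 d) (done2 d) true (pathB d) (pathC d) (pathD d) (front d) (pend0 d) (pend1 d).
Definition unset_pathA d :=
  Descr (done1 d) (done2 d) false (pathB d) (pathC d) (pathD d) (front d) (pend0 d) (pend1 d).
Definition set_pathB d :=
  Descr (done1 d) (done2 d) (pathA d) true (pathC d) (pathD d) (front d) (pend0 d) (pend1 d).
Definition set_pathC d :=
  Descr (done1 d) (done2 d) (pathA d) (pathB d) true (pathD d) (front d) (pend0 d) (pend1 d).
Definition set_pathD d :=
  Descr (done1 d) (done2 d) (pathA d) (pathB d) (pathC d) true (front d) (pend0 d) (pend1 d).
Definition set_pend0 d :=
  Descr (done1 d) (done2 d) (pathA d) (pathB d) (pathC d) (pathD d) (front d) true (pend1 d).
Definition set_pend1 d :=
  Descr (done1 d) (done2 d) (pathA d) (pathB d) (pathC d) (pathD d) (front d) (pend0 d) true.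
(* the clean part of the spine grows by one edge *)
Definition retreat d :=
  Descr (done1 d) (done2 d) (pathA d) (pathB d) (pathC d) (pathD d) (front d).-1 false false.

Definition tree_rank (e : edge vtx) : option (nat * nat) :=
  match e with
  | (Troot i, Tmid _ a, _) => Some (i, 4 * a + 3)
  | (Tmid i a, Tleaf _ _ b, _) => Some (i, 4 * a + b)
  | _ => None
  end.

Lemma tree_rank_inj l g e r : g \in T_edges l -> e \in T_edges l ->
  tree_rank g = Some r -> tree_rank e = Some r -> g = e.
Proof.
move=> /T_edgesP Hg /T_edgesP He.
case: Hg => [||||i a Hi Ha|i a b Hi Ha Hb|y Hy|y Hy|y Hy] //=;
case: He => [||||i' a' Hi' Ha'|i' a' b' Hi' Ha' Hb'|y' Hy'|y' Hy'|y' Hy'] //= <- [].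
- move=> -> E; have Ea : a = a' by lia.
  by rewrite Ea.
- lia.
- lia.
- move=> -> E; have Ea : a = a' by lia.
  have Eb : b = b' by lia.
  by rewrite Ea Eb.
Qed.

Lemma declared_next_tree l i d e g : (i == 1) || (i == 2) -> e \in T_edges l ->
  tree_rank e = Some (i, if i == 1 then done1 d else done2 d) ->
  g \in T_edges l -> declared (next_tree i d) g -> declared d g \/ g = e.
Proof.
move=> Hi eG He /T_edgesP.
case=> [||||i' a' Hi' Ha'|i' a' b' Hi' Ha' Hb'|y Hy|y Hy|y Hy] /=; try by left.
all: rewrite /tree_done; case/orP: Hi => /eqP Ei; case/orP: Hi' => /eqP Ei'; subst=> /=;
  rewrite ?addn0 ?addn1; try by left.
all: rewrite ltnS leq_eqVlt => /orP[/eqP E|]; [right|by left].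
all: apply: (tree_rank_inj _ eG _ He); rewrite /= ?E //.
all: by [apply: mem_root | apply: mem_leaf].
Qed.

Lemma declared_set_pathA l d g : g \in T_edges l ->
  declared (set_pathA d) g -> declared d g \/ g = (Troot 1, Pv 1, 3).
Proof. by case/T_edgesP => [||||i a _ _|i a b _ _ _|y _|y _|y _] /=; auto. Qed.
Lemma declared_set_pathB l d g : g \in T_edges l ->
  declared (set_pathB d) g -> declared d g \/ g = (Pv 1, Vv 0, 2).
Proof. by case/T_edgesP => [||||i a _ _|i a b _ _ _|y _|y _|y _] /=; auto. Qed.
Lemma declared_set_pathC l d g : g \in T_edges l ->
  declared (set_pathC d) g -> declared d g \/ g = (Vv 0, Pv 3, 2).
Proof. by case/T_edgesP => [||||i a _ _|i a b _ _ _|y _|y _|y _] /=; auto. Qed.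
Lemma declared_set_pathD l d g : g \in T_edges l ->
  declared (set_pathD d) g -> declared d g \/ g = (Pv 3, Troot 2, 3).
Proof. by case/T_edgesP => [||||i a _ _|i a b _ _ _|y _|y _|y _] /=; auto. Qed.
Lemma declared_unset_pathA l d g : g \in T_edges l ->
  declared (unset_pathA d) g -> declared d g.
Proof. by case/T_edgesP => [||||i a _ _|i a b _ _ _|y _|y _|y _] /=. Qed.

Lemma declared_set_pend0 l d g : g \in T_edges l -> declared (set_pend0 d) g ->
  declared d g \/ g = (Vv (front d), Pend (front d) 0, (front d %% 3).+1).
Proof.
case/T_edgesP => [||||i a _ _|i a b _ _ _|y _|y _|y _] /=; auto.
by case/orP=> [H|/andP[/eqP E _]]; [left; rewrite H|right; rewrite E].
Qed.

Lemma declared_set_pend1 l d g : g \in T_edges l -> declared (set_pend1 d) g ->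
  declared d g \/ g = (Vv (front d), Pend (front d) 1, ((front d - 1) %% 3).+1).
Proof.
case/T_edgesP => [||||i a _ _|i a b _ _ _|y _|y _|y _] /=; auto.
by case/orP=> [H|/andP[/eqP E _]]; [left; rewrite H|right; rewrite E].
Qed.

Lemma declared_retreat l d y g : front d = y.+1 -> (y.+1 <= l -> pend0 d && pend1 d) ->
  g \in T_edges l -> declared (retreat d) g -> declared d g \/ g = (Vv y, Vv y.+1, (y %% 3).+1).
Proof.
move=> Ef pends; case/T_edgesP => [||||i a _ _|i a b _ _ _|z Hz|z Hz|z Hz] /=; auto;
  rewrite Ef /=.
- by rewrite leq_eqVlt => /orP[/eqP E|H]; [right; rewrite E|left].
- move=> /orP[H|/andP[_ //]]; left; case: (ltngtP y.+1 z) => E //; first lia.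
  by have /andP[-> _] : pend0 d && pend1 d by apply: pends; lia.
- move=> /orP[H|/andP[_ //]]; left; case: (ltngtP y.+1 z) => E //; first lia.
  by have /andP[_ ->] : pend0 d && pend1 d by apply: pends; lia.
Qed.

Ltac occ_tac := solve [left; reflexivity | right; left; reflexivity | right; right; reflexivity].
Ltac guard_clause :=
  match goal with
  | |- forall a : nat, _ => let a := fresh "a" in let H := fresh "H" in
        move=> [|[|[|a]]] H //=; first [left; occ_tac | right; lia]
  | |- _ -> _ => let H := fresh "H" in move=> H; first [occ_tac | exfalso; lia]
  | |- _ \/ (_ /\ _ = (?x == 0)) =>
        first [left; occ_tac | right; split; reflexivity
              | (is_var x; destruct x; [left; occ_tac | right; split; reflexivity])]
  | |- _ \/ _ => first [left; occ_tac | right; repeat split; reflexivity]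
  end.
Ltac guard_tac := rewrite /guarded /=; repeat split; guard_clause.
Ltac mem_tac := match goal with
  | |- context [(Vv _, Vv _, _) \in T_edges ?l] => apply: (@mem_spine l); lia
  | |- context [(Vv _, Pend _ 0, _) \in T_edges ?l] => apply: (@mem_pend0 l); lia
  | |- context [(Vv _, Pend _ 1, _) \in T_edges ?l] => apply: (@mem_pend1 l); lia
  | |- context [(Troot _, Tmid _ _, _) \in T_edges ?l] => apply: (@mem_root l); reflexivity
  | |- context [(Tmid _ _, Tleaf _ _ _, _) \in T_edges ?l] => apply: (@mem_leaf l); reflexivity
  | |- context [(Troot _, Pv _, _) \in T_edges ?l] => exact: (@mem_q1p1 l)
  | |- context [(Pv _, Vv _, _) \in T_edges ?l] => exact: (@mem_p1v0 l)
  | |- context [(Vv _, Pv _, _) \in T_edges ?l] => exact: (@mem_v0p3 l)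
  | |- context [(Pv _, Troot _, _) \in T_edges ?l] => exact: (@mem_p3q2 l)
  end.
Ltac colour_tac := rewrite /colour /=; first [reflexivity | lia].
Ltac orient_tac := first [by left | by right].
Ltac update_tac := let g := fresh "g" in let gG := fresh "gG" in move=> g gG;
  lazymatch goal with
  | |- is_true (declared ?d _) -> is_true (declared ?d _) => by []
  | |- is_true (declared (unset_pathA _) _) -> _ => exact: (declared_unset_pathA gG)
  | |- is_true (declared (next_tree _ _) _) -> _ =>
      apply: (declared_next_tree _ _ _ gG); [reflexivity | mem_tac | reflexivity]
  | |- is_true (declared (set_pathA _) _) -> _ => exact: (declared_set_pathA gG)
  | |- is_true (declared (set_pathB _) _) -> _ => exact: (declared_set_pathB gG)
  | |- is_true (declared (set_pathC _) _) -> _ => exact: (declared_set_pathC gG)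
  | |- is_true (declared (set_pathD _) _) -> _ => exact: (declared_set_pathD gG)
  | |- is_true (declared (set_pend0 _) _) -> _ => exact: (declared_set_pend0 gG)
  | |- is_true (declared (set_pend1 _) _) -> _ => exact: (declared_set_pend1 gG)
  | |- is_true (declared (retreat _) _) -> _ =>
      apply: (declared_retreat _ _ gG);
      [reflexivity | first [move=> _; reflexivity | move=> ?; exfalso; lia]]
  end.
Ltac hstep :=
  lazymatch goal with
  | |- hoare _ _ _ [::] _ _ => apply: hoare_nil; reflexivity
  | |- hoare _ _ _ (APlace _ _ _ :: _) _ _ =>
      eapply hoare_place; [reflexivity | mem_tac | orient_tac | colour_tac | guard_tac | ]
  | |- hoare _ _ _ (ARemove _ _ :: _) _ _ =>
      eapply hoare_remove; [reflexivity | update_tac | guard_tac | ]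
  | |- hoare _ _ _ (ASlide _ _ _ _ :: _) _ _ =>
      eapply hoare_slide;
      [mem_tac | colour_tac | orient_tac | reflexivity | update_tac | guard_tac | ]
  end.

(* Phase 1 (and 3): clean T'_i branch by branch, each branch leaf by leaf,
   while T'_i is guarded at q_i by the colour-3 searcher s3. *)
Definition clean_leaf i a b : seq amove :=
  [:: APlace s2 (Tleaf i a b) (Tmid i a, Tleaf i a b, 2);
      ASlide s2 (Tmid i a, Tleaf i a b, 2) (Tmid i a) (next_tree i); ARemove s2 id].
Definition clean_branch i a : seq amove :=
  APlace s1 (Tmid i a) (Troot i, Tmid i a, 1) ::
  clean_leaf i a 0 ++ clean_leaf i a 1 ++ clean_leaf i a 2 ++
  [:: ASlide s1 (Troot i, Tmid i a, 1) (Troot i) (next_tree i); ARemove s1 id].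
Definition clean_subtree i := clean_branch i 0 ++ clean_branch i 1 ++ clean_branch i 2.

Definition descr_start l := Descr 0 0 false false false false l.+1 false false.
Definition descr_T1 l := Descr 12 0 false false false false l.+1 false false.

Lemma clean_T1_ok l : hoare l (None, None, None) (descr_start l)
  (APlace s3 (Troot 1) (Troot 1, Pv 1, 3) :: clean_subtree 1)
  (None, None, Some (Troot 1)) (descr_T1 l).
Proof. rewrite /clean_subtree /clean_branch /clean_leaf /=; do 40 hstep. Qed.

(* Phase 2: the spine.  [spine_srch x] is the searcher whose colour is that of
   the spine edge e_x, i.e. (x mod 3) + 1. *)
Definition spine_srch (x : nat) : 'I_3 := Ordinal (@ltn_pmod x 3 isT).

Lemma spine_srch0 x : x %% 3 = 0 -> spine_srch x = s1. Proof. by move=> H; apply: val_inj. Qed.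
Lemma spine_srch1 x : x %% 3 = 1 -> spine_srch x = s2. Proof. by move=> H; apply: val_inj. Qed.
Lemma spine_srch2 x : x %% 3 = 2 -> spine_srch x = s3. Proof. by move=> H; apply: val_inj. Qed.

Lemma mod3_cases y :
  [\/ [/\ y %% 3 = 0, y.+1 %% 3 = 1, y.+2 %% 3 = 2 & y.+3 %% 3 = 0],
      [/\ y %% 3 = 1, y.+1 %% 3 = 2, y.+2 %% 3 = 0 & y.+3 %% 3 = 1] |
      [/\ y %% 3 = 2, y.+1 %% 3 = 0, y.+2 %% 3 = 1 & y.+3 %% 3 = 2]].
Proof.
have : y %% 3 < 3 by apply: ltn_pmod.
by case E: (y %% 3) => [|[|[|]]] // _; [apply: Or31|apply: Or32|apply: Or33]; split=> //; lia.
Qed.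

(* The guard of T'_1 is searcher [spine_srch z]: it stands on p_1 if it has
   colour 2 (and then the edge q_1p_1 must be clean), on q_1 otherwise. *)
Definition guard_on_p1 (z : nat) : bool := z %% 3 == 1.
Definition guard_pos (z : nat) : vtx := if guard_on_p1 z then Pv 1 else Troot 1.

(* Before treating v_(y+1): T'_1 and the spine beyond v_(y+1) are clean, the
   searcher [spine_srch (y+1)] stands on v_(y+1), [spine_srch (y+2)] guards. *)
Definition pre_pl y : placement :=
  upd_pl (upd_pl (None, None, None) (spine_srch y.+1) (Some (Vv y.+1)))
         (spine_srch y.+2) (Some (guard_pos y.+2)).
Definition pre_d y := Descr 12 0 (guard_on_p1 y.+2) false false false y.+1 false false.

(* After treating v_(y+1): the pendant edges at v_(y+1) and e_y are clean too,
   and [spine_srch y] stands on v_y. *)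
Definition post_pl y : placement :=
  upd_pl (upd_pl (None, None, None) (spine_srch y) (Some (Vv y)))
         (spine_srch y.+2) (Some (guard_pos y.+2)).
Definition post_d y := Descr 12 0 (guard_on_p1 y.+2) false false false y false false.

(* The free searcher [spine_srch y] cleans the pendant edge of its colour at
   v_(y+1); the searcher on v_(y+1) cleans the other pendant edge and comes
   back; then [spine_srch y] slides down e_y. *)
Definition spine_step y : seq amove :=
  [:: APlace (spine_srch y) (Pend y.+1 1) (Vv y.+1, Pend y.+1 1, ((y.+1 - 1) %% 3).+1);
      ASlide (spine_srch y) (Vv y.+1, Pend y.+1 1, ((y.+1 - 1) %% 3).+1) (Vv y.+1) set_pend1;
      ASlide (spine_srch y.+1) (Vv y.+1, Pend y.+1 0, (y.+1 %% 3).+1) (Pend y.+1 0) set_pend0;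
      ARemove (spine_srch y.+1) id;
      APlace (spine_srch y.+1) (Vv y.+1) (Vv y.+1, Pend y.+1 0, (y.+1 %% 3).+1);
      ASlide (spine_srch y) (Vv y, Vv y.+1, (y %% 3).+1) (Vv y) retreat;
      ARemove (spine_srch y.+1) id].

Ltac mod3_tac y :=
  let H0 := fresh "H0" in let H1 := fresh "H1" in let H2 := fresh "H2" in
  let H3 := fresh "H3" in
  case: (mod3_cases y) => [[H0 H1 H2 H3]|[H0 H1 H2 H3]|[H0 H1 H2 H3]];
  rewrite ?(spine_srch0 H0) ?(spine_srch1 H0) ?(spine_srch2 H0)
          ?(spine_srch0 H1) ?(spine_srch1 H1) ?(spine_srch2 H1)
          ?(spine_srch0 H2) ?(spine_srch1 H2) ?(spine_srch2 H2)
          ?(spine_srch0 H3) ?(spine_srch1 H3) ?(spine_srch2 H3)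
          /guard_pos /guard_on_p1 ?H2 ?H3 /=.

Lemma spine_step_ok l y : y < l ->
  hoare l (pre_pl y) (pre_d y) (spine_step y) (post_pl y) (post_d y).
Proof.
move=> lt_yl; rewrite /pre_pl /pre_d /post_pl /post_d /spine_step.
by mod3_tac y; do 8 hstep.
Qed.

(* The guard role passes from [spine_srch (n+2)] to the free searcher
   [spine_srch (n+1)], which enters at q_1 or p_1 according to its colour.
   When the guard leaves p_1 for q_1 the edge q_1p_1 is given up (it may be
   recontaminated): the strategy is not monotone. *)
Definition handover n : seq amove :=
  if n.+1 %% 3 == 0 then
    [:: APlace (spine_srch n.+1) (Troot 1) (Troot 1, Tmid 1 0, 1);
        ARemove (spine_srch n.+2) unset_pathA]
  else if n.+1 %% 3 == 1 then
    [:: ASlide (spine_srch n.+2) (Troot 1, Pv 1, 3) (Pv 1) set_pathA;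
        APlace (spine_srch n.+1) (Pv 1) (Pv 1, Vv 0, 2); ARemove (spine_srch n.+2) id]
  else [:: APlace (spine_srch n.+1) (Troot 1) (Troot 1, Pv 1, 3);
           ARemove (spine_srch n.+2) id].

Lemma handover_ok l y :
  hoare l (post_pl y.+1) (post_d y.+1) (handover y.+1) (pre_pl y) (pre_d y).
Proof.
by rewrite /pre_pl /pre_d /post_pl /post_d /handover; mod3_tac y; do 4 hstep.
Qed.

(* The spine vertices v_(n+1), v_n, .., v_1, in this order. *)
Fixpoint sweep (n : nat) : seq amove :=
  if n is n'.+1 then spine_step n'.+1 ++ handover n'.+1 ++ sweep n' else spine_step 0.

Lemma sweep_ok l n : n < l -> hoare l (pre_pl n) (pre_d n) (sweep n) (post_pl 0) (post_d 0).
Proof.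
elim: n => [|n IH] lt_nl; first exact: spine_step_ok.
apply: (hoare_cat (spine_step_ok lt_nl)).
apply: (hoare_cat (@handover_ok l n)).
by apply: IH; lia.
Qed.

(* Start of phase 2 for l = m+1: the guard role passes from s3 to
   [spine_srch (m+2)], and [spine_srch (m+1)] cleans the last spine edge. *)
Definition sweep_start m : seq amove :=
  (if m.+2 %% 3 == 1 then
     [:: ASlide s3 (Troot 1, Pv 1, 3) (Pv 1) set_pathA; APlace s2 (Pv 1) (Pv 1, Vv 0, 2);
         ARemove s3 id]
   else if m.+2 %% 3 == 2 then [::]
   else [:: APlace s1 (Troot 1) (Troot 1, Tmid 1 0, 1); ARemove s3 id]) ++
  [:: APlace (spine_srch m.+1) (Vv m.+2) (Vv m.+1, Vv m.+2, (m.+1 %% 3).+1);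
      ASlide (spine_srch m.+1) (Vv m.+1, Vv m.+2, (m.+1 %% 3).+1) (Vv m.+1) retreat].

Lemma sweep_start_ok m : hoare m.+1 (None, None, Some (Troot 1)) (descr_T1 m.+1)
  (sweep_start m) (pre_pl m) (pre_d m).
Proof. by rewrite /sweep_start /pre_pl /pre_d; mod3_tac m; do 7 hstep. Qed.

(* Phase 3: clean the path P from q_1 to q_2 (the guard of T'_1 moves along
   it), then T'_2. *)
Definition clean_P : seq amove :=
  [:: ASlide s3 (Troot 1, Pv 1, 3) (Pv 1) set_pathA; APlace s2 (Pv 1) (Pv 1, Vv 0, 2);
      ASlide s2 (Pv 1, Vv 0, 2) (Vv 0) set_pathB; ARemove s3 id;
      ASlide s2 (Vv 0, Pv 3, 2) (Pv 3) set_pathC; APlace s3 (Pv 3) (Pv 3, Troot 2, 3);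
      ASlide s3 (Pv 3, Troot 2, 3) (Troot 2) set_pathD; ARemove s2 id; ARemove s1 id].

Definition descr_P := Descr 12 0 true true true true 0 false false.
Definition descr_final := Descr 12 12 true true true true 0 false false.

Lemma clean_P_ok l : hoare l (post_pl 0) (post_d 0) clean_P
  (None, None, Some (Troot 2)) descr_P.
Proof.
rewrite /post_pl /post_d /clean_P (spine_srch0 (erefl : 0 %% 3 = 0)).
by rewrite (spine_srch2 (erefl : 2 %% 3 = 2)) /guard_pos /guard_on_p1 /=; do 10 hstep.
Qed.

Lemma clean_T2_ok l : hoare l (None, None, Some (Troot 2)) descr_P
  (clean_subtree 2) (None, None, Some (Troot 2)) descr_final.
Proof. rewrite /clean_subtree /clean_branch /clean_leaf /=; do 40 hstep. Qed.

Definition full_script m : seq amove :=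
  (APlace s3 (Troot 1) (Troot 1, Pv 1, 3) :: clean_subtree 1) ++
  sweep_start m ++ sweep m ++ clean_P ++ clean_subtree 2.

Lemma full_script_ok m : hoare m.+1 (None, None, None) (descr_start m.+1)
  (full_script m) (None, None, Some (Troot 2)) descr_final.
Proof.
apply: (hoare_cat (@clean_T1_ok m.+1)); apply: (hoare_cat (@sweep_start_ok m)).
apply: (hoare_cat (@sweep_ok m.+1 m (ltnSn m))); apply: (hoare_cat (@clean_P_ok m.+1)).
exact: (@clean_T2_ok m.+1).
Qed.

Lemma declared_start l g : g \in T_edges l -> declared (descr_start l) g = false.
Proof.
case/T_edgesP => [||||i a Hi _|i a b Hi _ _|y Hy|y Hy|y Hy] //=; rewrite /tree_done /=.
- by case/orP: Hi => /eqP -> /=.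
- by case/orP: Hi => /eqP -> /=.
- lia.
- rewrite andbF orbF; lia.
- rewrite andbF orbF; lia.
Qed.

Lemma declared_final l g : g \in T_edges l -> declared descr_final g.
Proof.
case/T_edgesP => [||||i a Hi Ha|i a b Hi Ha Hb|y Hy|y Hy|y Hy] //=; rewrite /tree_done /=.
- by case/orP: Hi => /eqP -> /=; lia.
- by case/orP: Hi => /eqP -> /=; lia.
- lia.
- lia.
Qed.

Theorem lemma3p6 (l : nat) :
  3 <= l ->
  search_strategy_exists (T_edges l) (fun j : 'I_3 => (nat_of_ord j).+1).
Proof.
case: l => [|m] // _.
have start_described :
    described m.+1 (None, None, None) (descr_start m.+1) (empty_state vtx 3).
  split=> [j|g gG]; first by case: j => [[|[|[|]]] ?].
  by rewrite declared_start.
have [script_valid [_ final_clean]] := full_script_ok start_described.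
apply: (strategy_of_script script_valid) => e eG.
exact: final_clean eG (declared_final eG).
Qed.
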